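(* Let $\mathbb{F}$ be a field, $\sigma$ a field automorphism of $\mathbb{F}$ of finite order $m$, $\delta=0$, and $K=\{\beta\in\mathbb{F}:\sigma(\beta)=\beta\}$. A vector $(a_1,\dots,a_r)\in\mathbb{F}^r$ is a $(\sigma,\delta)$-multiplicity sequence if and only if either $a_1=\dots=a_r=0$, or $a_1\ne0$ and for each $i=1,\dots,r-1$ there is $\beta_i\in\mathbb{F}^*$ with $$a_{i+1}=\sigma(\beta_i)\beta_i^{-1}a_i\quad\text{and}\quad \mathrm{T}_{\mathbb{F}/K}(\beta_ia_i^{-1})\ne0.$$ In particular, for $a\ne0$, $(a,\dots,a)\in\mathbb{F}^r$ ($r\ge2$) is a $(\sigma,\delta)$-multiplicity sequence if and only if $\mathrm{T}_{\mathbb{F}/K}(a^{-1})\ne0$.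
   Context: $\mathbb{F}[x;\sigma,0]$ is the skew polynomial ring with $xa=\sigma(a)x$. $\mathrm{T}_{\mathbb{F}/K}(a)=\sum_{i=0}^{m-1}\sigma^i(a)$. For $\mathbf a=(a_1,\dots,a_r)$, $P_{\mathbf a}=(x-a_r)\cdots(x-a_1)$; $\mathbf a$ is a $(\sigma,\delta)$-multiplicity sequence if $a_1$ is the only $b\in\mathbb{F}$ such that $x-b$ divides $P_{\mathbf a}$ on the right. *)

From HB Require Import structures.
From mathcomp Require Import all_boot all_order all_algebra.
Set Implicit Arguments. Unset Strict Implicit. Unset Printing Implicit Defensive.
Import GRing.Theory.
Local Open Scope ring_scope.

(* Skew polynomial ring F[x; sigma, 0], elements represented by their
   (left) coefficient polynomial: p = \sum_i p`_i x^i, with x a = sigma(a) x.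
   Hence (c x^i)(d x^j) = c sigma^i(d) x^(i+j). *)
Definition skew_mul (F : fieldType) (s : {rmorphism F -> F}) (p q : {poly F})
  : {poly F} :=
  \sum_(i < size p) \sum_(j < size q)
     (p`_i * iter i s (q`_j)) *: 'X^(i + j).

Definition is_order (F : fieldType) (s : {rmorphism F -> F}) (m : nat) :=
  (0 < m)%N /\ (forall x, iter m s x = x) /\
  (forall k, (0 < k < m)%N -> exists x, iter k s x != x).

Definition trace (F : fieldType) (s : {rmorphism F -> F}) (m : nat) (a : F) : F :=
  \sum_(i < m) iter i s a.

(* P_a = (x - a_r) ... (x - a_1) for a = [:: a_1; ...; a_r] *)
Definition Pseq (F : fieldType) (s : {rmorphism F -> F}) (a : seq F) : {poly F} :=
  foldr (fun c acc => skew_mul s acc ('X - c%:P)) 1 a.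

Definition rdvd (F : fieldType) (s : {rmorphism F -> F}) (q p : {poly F}) :=
  exists r : {poly F}, p = skew_mul s r q.

Definition mult_seq (F : fieldType) (s : {rmorphism F -> F}) (a : seq F) :=
  forall b : F, rdvd s ('X - b%:P) (Pseq s a) <-> b = a`_0.

From HB Require Import structures.
From mathcomp Require Import all_boot all_order all_algebra.
From mathcomp Require Import ring.
From Stdlib Require Import Classical.
Set Implicit Arguments.
Unset Strict Implicit.
Unset Printing Implicit Defensive.
Import GRing.Theory.
Local Open Scope ring_scope.

(* For b in F, let x act on F by the sigma-semilinear map g |-> sigma(g) b.
   This makes F a left module over F[x; sigma, 0]; act f b g denotes f . g.
   1. The action is multiplicative (act_mul), so x - b divides p on the right
      iff p . 1 = 0 (rdvd_XsubCP), and moving the base point b to its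
      sigma-conjugate b^g = sigma(g) b / g relates p . g to p . 1 (act_sconj).
   2. When sigma has finite order m we prove Dedekind independence of the
      powers of sigma, nonvanishing of the trace, additive Hilbert 90 and a
      dichotomy for c sigma(d) - a d = 1: it is solvable, or c sigma(d) = a d
      has a nonzero solution.
   3. Since P_(a :: l) = P_l (x - a), a right root b <> a of P_(a :: l) yields
      the right root b^(b - a) of P_l.  Hence a :: l has a as its only right
      root iff l does and the pair (a, l_0) is "linked", i.e. satisfies the
      two-term condition of the theorem; linkedness is equivalent to the
      unsolvability of l_0 sigma(d) - a d = 1.  Passing uniqueness to the tail
      uses Hilbert 90 to show all roots of P_l linked to a coincide.
   4. Unfolding the resulting chain of linked pairs gives both statements. *)

Section SkewAction.
Variables (F : fieldType) (s : {rmorphism F -> F}).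

(* sigma^n, packaged as a ring morphism so that the generic morphism lemmas
   apply to it. *)
Fixpoint spow (n : nat) : {rmorphism F -> F} :=
  match n with 0 => idfun | n'.+1 => (s \o spow n')%FUN end.

Lemma spowE n x : spow n x = iter n s x.
Proof. by elim: n => //= n ->. Qed.

Lemma spowS n x : spow n.+1 x = s (spow n x).
Proof. by []. Qed.

Lemma spowD i j x : spow i (spow j x) = spow (i + j) x.
Proof. by rewrite !spowE iterD. Qed.

Lemma spow_s i x : spow i (s x) = spow i.+1 x.
Proof. by rewrite (spowD i 1) addn1. Qed.

Lemma spow_fix k i : s k = k -> spow i k = k.
Proof. by move=> sk; elim: i => //= i ->. Qed.

(* The sigma-norm N_i(b) = b sigma(b) ... sigma^(i-1)(b); x^i acts on g as
   g |-> sigma^i(g) N_i(b). *)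
Definition snorm (i : nat) (b : F) : F := \prod_(j < i) spow j b.

Lemma snorm0 b : snorm 0 b = 1.
Proof. by rewrite /snorm big_ord0. Qed.

Lemma snormS i b : snorm i.+1 b = snorm i b * spow i b.
Proof. by rewrite /snorm big_ord_recr. Qed.

Lemma snormD i j b : snorm (i + j) b = snorm i b * spow i (snorm j b).
Proof.
rewrite /snorm big_split_ord /= rmorph_prod; congr (_ * _).
by apply: eq_bigr => k _; rewrite spowD.
Qed.

Definition act (f : {poly F}) (b g : F) : F :=
  \sum_(i < size f) f`_i * spow i g * snorm i b.

Lemma act_wide n (f : {poly F}) b g : (size f <= n)%N ->
  act f b g = \sum_(i < n) f`_i * spow i g * snorm i b.
Proof.
move=> le_f_n; rewrite /act (big_ord_widen n (fun i => f`_i * spow i g * snorm i b)) //.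
rewrite big_mkcond; apply: eq_bigr => i _; case: ltnP => // le_f_i.
by rewrite nth_default // !mul0r.
Qed.

Lemma act0 b g : act 0 b g = 0.
Proof. by rewrite /act size_poly0 big_ord0. Qed.

Lemma actD (f h : {poly F}) b g : act (f + h) b g = act f b g + act h b g.
Proof.
set n := maxn (size f) (size h).
rewrite (@act_wide n) ?(leq_trans (size_polyD _ _)) //.
rewrite (@act_wide n f) ?leq_maxl // (@act_wide n h) ?leq_maxr //.
by rewrite -big_split; apply: eq_bigr => i _; rewrite coefD !mulrDl.
Qed.

Lemma actB (f h : {poly F}) b g : act (f - h) b g = act f b g - act h b g.
Proof.
rewrite actD; congr (_ + _); rewrite /act size_polyN -sumrN.
by apply: eq_bigr => i _; rewrite coefN !mulNr.
Qed.

Lemma act_sum (I : Type) (r : seq I) (P : pred I) (f : I -> {poly F}) b g :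
  act (\sum_(i <- r | P i) f i) b g = \sum_(i <- r | P i) act (f i) b g.
Proof. by apply: (big_morph (fun p => act p b g)) => [p q|]; [exact: actD|exact: act0]. Qed.

Lemma act_monomial c k b g : act (c *: 'X^k) b g = c * spow k g * snorm k b.
Proof.
rewrite (@act_wide k.+1); last first.
  by apply: (leq_trans (size_scale_leq _ _)); rewrite size_polyXn.
rewrite big_ord_recr /= big1 ?add0r; last first.
  by move=> i _; rewrite coefZ coefXn (ltn_eqF (ltn_ord i)) mulr0 !mul0r.
by rewrite coefZ coefXn eqxx mulr1.
Qed.

Lemma act1 b g : act 1 b g = g.
Proof.
by rewrite /act size_poly1 big_ord_recr big_ord0 /= coef1 snorm0 add0r mul1r mulr1.
Qed.

Lemma act_XsubC b c g : act ('X - b%:P) c g = s g * c - b * g.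
Proof.
rewrite /act size_XsubC !big_ord_recr big_ord0 /= !coefB coefX coefC !eqxx /=.
rewrite coefX coefC /= snorm0 snormS snorm0 /=; ring.
Qed.

Lemma act_arg0 (f : {poly F}) b : act f b 0 = 0.
Proof. by rewrite /act big1 // => i _; rewrite rmorph0 mulr0 mul0r. Qed.

Lemma act_argB (f : {poly F}) b g h : act f b (g - h) = act f b g - act f b h.
Proof.
rewrite /act -sumrB; apply: eq_bigr => i _.
by rewrite rmorphB mulrBr mulrBl.
Qed.

Lemma act_argZ (f : {poly F}) b k g : s k = k -> act f b (k * g) = k * act f b g.
Proof.
move=> sk; rewrite /act mulr_sumr; apply: eq_bigr => i _.
by rewrite rmorphM spow_fix //; ring.
Qed.

Lemma skew_mul_wide n (f g : {poly F}) : (size f <= n)%N ->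
  skew_mul s f g =
  \sum_(i < n) \sum_(j < size g) (f`_i * spow i g`_j) *: 'X^(i + j).
Proof.
move=> le_f_n; rewrite /skew_mul (big_ord_widen n (fun i : nat =>
   \sum_(j < size g) (f`_i * iter i s g`_j) *: 'X^(i + j))) //.
rewrite big_mkcond; apply: eq_bigr => i _; case: ltnP => [_|le_f_i].
  by apply: eq_bigr => j _; rewrite spowE.
by rewrite big1 // => j _; rewrite nth_default // mul0r scale0r.
Qed.

Lemma act_mul (f g : {poly F}) b x : act (skew_mul s f g) b x = act f b (act g b x).
Proof.
rewrite (@skew_mul_wide (size f)) // act_sum [in RHS]/act.
apply: eq_bigr => i _; rewrite act_sum rmorph_sum mulr_sumr mulr_suml.
apply: eq_bigr => j _; rewrite act_monomial snormD !rmorphM spowD; ring.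
Qed.

Definition sconj (b g : F) : F := s g * b / g.

Lemma snorm_sconj i b g : g != 0 -> snorm i (sconj b g) * g = spow i g * snorm i b.
Proof.
move=> g0; elim: i => [|i IH]; first by rewrite !snorm0 mulr1 mul1r.
have gi0 : spow i g != 0 by rewrite fmorph_eq0.
rewrite !snormS mulrAC IH /sconj !rmorphM fmorphV spow_s -/(spow i.+1 g) /=.
by field.
Qed.

Lemma act_sconj (f : {poly F}) b g : g != 0 -> act f b g = act f (sconj b g) 1 * g.
Proof.
move=> g0; rewrite /act mulr_suml; apply: eq_bigr => i _.
by rewrite rmorph1 mulr1 -(mulrA _ (snorm i _)) snorm_sconj //; ring.
Qed.

Lemma sconjZ b k g : s k = k -> k != 0 -> sconj b (k * g) = sconj b g.
Proof.
move=> sk k0; rewrite /sconj rmorphM sk.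
have [->|g0] := eqVneq g 0; first by rewrite !(mulr0, invr0, rmorph0, mul0r).
by field; rewrite k0 g0.
Qed.

Lemma sconj_fixed b g : b != 0 -> g != 0 -> sconj b g = b -> s g = g.
Proof.
move=> b0 g0 /(congr1 (fun x => x * g)); rewrite /sconj mulfVK // mulrC.
exact: mulfI.
Qed.

Lemma skew_mul0l (g : {poly F}) : skew_mul s 0 g = 0.
Proof. by rewrite /skew_mul size_poly0 big_ord0. Qed.

Lemma skew_mulDl (f h g : {poly F}) :
  skew_mul s (f + h) g = skew_mul s f g + skew_mul s h g.
Proof.
set n := maxn (size f) (size h).
rewrite (@skew_mul_wide n) ?(leq_trans (size_polyD _ _)) //.
rewrite (@skew_mul_wide n f) ?leq_maxl // (@skew_mul_wide n h) ?leq_maxr //.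
rewrite -big_split; apply: eq_bigr => i _; rewrite -big_split.
by apply: eq_bigr => j _; rewrite coefD mulrDl scalerDl.
Qed.

Lemma skew_mul_monomial_XsubC c k b :
  skew_mul s (c *: 'X^k) ('X - b%:P) = c *: 'X^(k.+1) - (c * spow k b) *: 'X^k.
Proof.
rewrite (@skew_mul_wide k.+1); last first.
  by apply: (leq_trans (size_scale_leq _ _)); rewrite size_polyXn.
rewrite big_ord_recr /= big1 ?add0r; last first.
  move=> i _; apply: big1 => j _.
  by rewrite coefZ coefXn (ltn_eqF (ltn_ord i)) mulr0 !mul0r scale0r.
rewrite size_XsubC !big_ord_recr big_ord0 /= !coefB coefX coefC !eqxx /=.
rewrite coefX coefC /= coefZ coefXn eqxx mulr1 sub0r subr0 rmorphN rmorph1 add0r.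
by rewrite addn0 addn1 mulr1 mulrN scaleNr addrC.
Qed.

(* Cancelling the leading term of p by a right multiple of x - b
   (one step of right division). *)
Lemma size_sub_lead_XsubC (p : {poly F}) b k : size p = k.+2 ->
  (size (p - skew_mul s (p`_k.+1 *: 'X^k) ('X - b%:P))%R <= k.+1)%N.
Proof.
move=> sp; apply/leq_sizeP => j lt_k_j.
rewrite coefB skew_mul_monomial_XsubC coefB !coefZ !coefXn (gtn_eqF lt_k_j).
rewrite mulr0 subr0; have [->|ne_j] := eqVneq j k.+1; first by rewrite mulr1 subrr.
by rewrite mulr0 subr0 nth_default // sp ltn_neqAle eq_sym ne_j.
Qed.

Lemma rdvd_XsubCP (p : {poly F}) b : rdvd s ('X - b%:P) p <-> act p b 1 = 0.
Proof.
split=> [[r ->]|]; first by rewrite act_mul act_XsubC rmorph1 mul1r mulr1 subrr act_arg0.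
elim: {p}(size p) {-2}p (leqnn (size p)) => [|n IH] p le_p_n pb0.
  by exists 0; move: le_p_n; rewrite size_poly_leq0 skew_mul0l => /eqP.
have [lt_p_n|ge_p_n] := ltnP (size p) n.+1; first exact: IH.
have {ge_p_n} sp : size p = n.+1 by apply/eqP; rewrite eqn_leq le_p_n.
case: n IH le_p_n sp => [|k] IH _ sp.
  move: pb0; rewrite /act sp big_ord_recr big_ord0 /= snorm0 !mulr1 add0r.
  have : lead_coef p != 0 by rewrite lead_coef_eq0 -size_poly_eq0 sp.
  by rewrite lead_coefE sp => /eqP.
set t := p`_k.+1 *: 'X^k.
have [r hr] : rdvd s ('X - b%:P) (p - skew_mul s t ('X - b%:P)).
  apply: IH; first exact: size_sub_lead_XsubC.
  by rewrite actB pb0 act_mul act_XsubC rmorph1 mul1r mulr1 subrr act_arg0 subrr.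
by exists (r + t); rewrite skew_mulDl -hr subrK.
Qed.

End SkewAction.

Section FiniteOrder.
Variables (F : fieldType) (s : {rmorphism F -> F}) (m : nat).
Hypothesis hm : is_order s m.

Local Notation spow := (spow s).

Lemma order_gt0 : (0 < m)%N. Proof. by case: hm. Qed.

Lemma spow_order x : spow m x = x.
Proof. by case: hm => _ [sm _]; rewrite spowE sm. Qed.

Lemma spow_distinct i j : (i < j < m)%N -> exists y, spow i y != spow j y.
Proof.
case/andP=> lt_ij lt_jm; case: hm => _ [_ sk].
have [x sx] : exists x, iter (j - i) s x != x.
  by apply: sk; rewrite subn_gt0 lt_ij (leq_ltn_trans (leq_subr _ _) lt_jm).
exists x; apply: contra sx => /eqP e; apply/eqP; apply: (fmorph_inj (spow i)).
by rewrite -spowE spowD subnKC ?e // ltnW.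
Qed.

(* sigma is onto, with inverse sigma^(m-1). *)
Lemma s_surj x : exists y, s y = x.
Proof.
by exists (spow m.-1 x); rewrite -[s _]/(spow m.-1.+1 x) prednK ?order_gt0 ?spow_order.
Qed.

Lemma dedekind n (e : nat -> F) : (n <= m)%N ->
  (forall x, \sum_(i < n) e i * spow i x = 0) -> forall i, (i < n)%N -> e i = 0.
Proof.
elim: n e => [|n IH] e le_n_m He i; first by rewrite ltn0.
have He' y : forall j, (j < n)%N -> e j * (spow j y - spow n y) = 0.
  apply: IH => [|x]; first exact: ltnW.
  have := He (x * y); have := He x; rewrite !big_ord_recr /= => h1 h2.
  have <- : (\sum_(j < n) e j * spow j (x * y) + e n * spow n (x * y)) -
         spow n y * (\sum_(j < n) e j * spow j x + e n * spow n x) =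
         \sum_(j < n) e j * (spow j y - spow n y) * spow j x.
    rewrite rmorphM mulrDr mulr_sumr opprD addrACA.
    have -> : e n * (spow n x * spow n y) - spow n y * (e n * spow n x) = 0 by ring.
    by rewrite addr0 -sumrB; apply: eq_bigr => j _; rewrite rmorphM; ring.
  by rewrite h1 h2 mulr0 subr0.
have e_lt j : (j < n)%N -> e j = 0.
  move=> lt_jn; have [|y hy] := @spow_distinct j n; first by rewrite lt_jn.
  by have /eqP := He' y j lt_jn; rewrite mulf_eq0 subr_eq0 (negbTE hy) orbF => /eqP.
rewrite ltnS leq_eqVlt => /orP[/eqP ->|/e_lt //].
have := He 1; rewrite big_ord_recr /= big1 ?add0r ?rmorph1 ?mulr1 // => j _.
by rewrite e_lt // mul0r.
Qed.

Lemma sum_shift_cyclic (V : zmodType) n (f : nat -> V) : (0 < n)%N -> f n = f 0%N ->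
  \sum_(i < n) f i.+1 = \sum_(i < n) f i.
Proof. by case: n => // n _ fn; rewrite big_ord_recr big_ord_recl /= fn addrC. Qed.

Local Notation tr := (trace s m).

Lemma traceE x : tr x = \sum_(i < m) spow i x.
Proof. by apply: eq_bigr => i _; rewrite spowE. Qed.

Lemma trace_s x : tr (s x) = tr x.
Proof.
rewrite !traceE -(@sum_shift_cyclic _ m (fun i => spow i x)) ?order_gt0 ?spow_order //.
by apply: eq_bigr => i _; rewrite spow_s.
Qed.

Lemma s_trace x : s (tr x) = tr x.
Proof.
by rewrite traceE rmorph_sum -(@sum_shift_cyclic _ m (fun i => spow i x)) ?order_gt0 ?spow_order.
Qed.

Lemma traceB x y : tr (x - y) = tr x - tr y.
Proof. by rewrite !traceE -sumrB; apply: eq_bigr => i _; rewrite rmorphB. Qed.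

Lemma traceZ k x : s k = k -> tr (k * x) = k * tr x.
Proof.
by move=> sk; rewrite !traceE mulr_sumr; apply: eq_bigr => i _; rewrite rmorphM spow_fix.
Qed.

Lemma trace_cobound x : tr (s x - x) = 0.
Proof. by rewrite traceB trace_s subrr. Qed.

(* The trace is not identically zero, by Dedekind independence. *)
Lemma trace_neq0 : exists w, tr w != 0.
Proof.
apply: NNPP => all0.
have tr0 x : \sum_(i < m) (fun _ => 1 : F) i * spow i x = 0.
  under eq_bigr do rewrite mul1r; rewrite -traceE.
  by have [//|nz] := eqVneq (tr x) 0; case: all0; exists x.
by have /eqP := dedekind (e := fun=> 1) (leqnn m) tr0 order_gt0; rewrite oner_eq0.
Qed.

Lemma hilbert90 x : tr x = 0 -> exists u, s u - u = x.
Proof.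
move=> trx; have [w trw] := trace_neq0; set t := tr w.
pose y i := \sum_(j < i) spow j x.
have sy i : s (y i) = y i.+1 - x.
  by rewrite /y rmorph_sum big_ord_recl [x + _]addrC addrK.
pose v := \sum_(i < m) y i * spow i w.
have sv : s v = v - x * t.
  rewrite /v rmorph_sum.
  have -> : \sum_(i < m) s (y i * spow i w) =
     \sum_(i < m) y i.+1 * spow i.+1 w - x * \sum_(i < m) spow i.+1 w.
    rewrite mulr_sumr -sumrB; apply: eq_bigr => i _.
    by rewrite rmorphM sy -spowS; ring.
  rewrite (@sum_shift_cyclic _ m (fun i => y i * spow i w)) ?order_gt0 //; last first.
    by rewrite /y big_ord0 mul0r -traceE trx mul0r.
  by rewrite (@sum_shift_cyclic _ m (fun i => spow i w)) ?order_gt0 ?spow_order -?traceE.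
by exists (- v / t); rewrite rmorphM fmorphV rmorphN sv s_trace -/t; field.
Qed.

(* e_0 = z, e_(i+1) = (c sigma(e_i) - t) / a: coefficients making
   d = sum_(i < m) e_i sigma^i(w) an approximate solution of
   c sigma(d) - a d = t T(w) (exact when e_m = z, see twisted_sum). *)
Fixpoint twisted (a c z t : F) (i : nat) : F :=
  if i is i'.+1 then (c * s (twisted a c z t i') - t) / a else z.

Lemma twisted_affine a c z t i :
  twisted a c z t i = twisted a c 1 0 i * spow i z + twisted a c 0 t i.
Proof. by elim: i => [|i IH] /=; [rewrite mul1r addr0 | rewrite IH rmorphD rmorphM; ring]. Qed.

Lemma twisted_sum a c z t w : a != 0 -> twisted a c z t m = z ->
  let d := \sum_(i < m) twisted a c z t i * spow i w in
  c * s d - a * d = t * tr w.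
Proof.
move=> a0 em; rewrite /=; set e := twisted a c z t.
have ce i : c * s (e i) = a * e i.+1 + t by rewrite /e /=; field.
rewrite rmorph_sum mulr_sumr.
have -> : \sum_(i < m) c * s (e i * spow i w) =
   a * \sum_(i < m) e i.+1 * spow i.+1 w + t * \sum_(i < m) spow i.+1 w.
  rewrite !mulr_sumr -big_split; apply: eq_bigr => i _.
  by rewrite rmorphM mulrA ce -spowS mulrDl mulrA.
rewrite (@sum_shift_cyclic _ m (fun i => e i * spow i w)) ?order_gt0 //; last first.
  by rewrite spow_order /e em.
rewrite (@sum_shift_cyclic _ m (fun i => spow i w)) ?order_gt0 ?spow_order //.
by rewrite traceE addrAC subrr add0r.
Qed.

Lemma twisted_eigen a c : a != 0 -> twisted a c 1 0 m = 1 ->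
  exists2 d, d != 0 & c * s d = a * d.
Proof.
move=> a0 em; apply: NNPP => no_eigen.
have sum0 w : \sum_(i < m) twisted a c 1 0 i * spow i w = 0.
  have := twisted_sum w a0 em; rewrite mul0r => /eqP; rewrite subr_eq0.
  set d := \sum_(i < m) _ => /eqP eig.
  by have [//|d0] := eqVneq d 0; case: no_eigen; exists d.
by have /eqP := dedekind (leqnn m) sum0 order_gt0; rewrite oner_eq0.
Qed.

(* Otherwise a suitable z makes e periodic with t = 1, and dividing by a
   nonzero trace solves c sigma(d) - a d = 1. *)
Lemma twisted_solution a c : a != 0 -> twisted a c 1 0 m != 1 ->
  exists d, c * s d - a * d = 1.
Proof.
move=> a0 em; set P := twisted a c 1 0 m; set Q := twisted a c 0 1 m.
set z := Q / (1 - P); have P1 : 1 - P != 0 by rewrite subr_eq0 eq_sym.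
have ez : twisted a c z 1 m = z by rewrite twisted_affine spow_order -/P -/Q /z; field.
have [w trw] := trace_neq0; have := twisted_sum w a0 ez.
set d := \sum_(i < m) _ => hd; exists (d / tr w).
by rewrite rmorphM fmorphV s_trace mulrA (mulrA a) -mulrBl hd mul1r divff.
Qed.

Lemma semilinear_dichotomy a c : a != 0 -> ~ (exists d, c * s d - a * d = 1) ->
  exists2 d, d != 0 & c * s d = a * d.
Proof.
move=> a0 no_sol; have [em|em] := eqVneq (twisted a c 1 0 m) 1.
  exact: twisted_eigen.
by case: no_sol; apply: twisted_solution.
Qed.

End FiniteOrder.

Section MultiplicitySequences.
Variables (F : fieldType) (s : {rmorphism F -> F}) (m : nat).
Hypothesis hm : is_order s m.

Local Notation tr := (trace s m).
Local Notation act := (act s).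
Local Notation sconj := (sconj s).

Definition twist_step (a1 a2 : F) := exists2 beta, beta != 0 &
  a2 = s beta * beta^-1 * a1 /\ tr (beta * a1^-1) != 0.

Definition linked (a1 a2 : F) := (a1 = 0 /\ a2 = 0) \/ (a1 != 0 /\ twist_step a1 a2).

Lemma twist_step_neq0 a1 a2 : a1 != 0 -> twist_step a1 a2 -> a2 != 0.
Proof. by move=> a0 [b b0 [-> _]]; rewrite !mulf_neq0 ?invr_eq0 ?fmorph_eq0. Qed.

Lemma linked0 c : linked 0 c <-> c = 0.
Proof. by split=> [[[]|[]]|->]; [|rewrite eqxx|left]. Qed.

Lemma linked_unsolvable a1 c : linked a1 c <-> ~ exists d, c * s d - a1 * d = 1.
Proof.
have [->|a0] := eqVneq a1 0.
  rewrite linked0; split=> [-> [d]|no_sol].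
    by rewrite !mul0r subr0 => /eqP; rewrite eq_sym oner_eq0.
  apply/eqP; apply: contraT => c0; case: no_sol.
  by have [d sd] := s_surj hm c^-1; exists d; rewrite sd mul0r subr0 divff.
split=> [[[a00 _]|[_ [b b0 [-> trb]]]]|no_sol]; first by rewrite a00 eqxx in a0.
  case=> d hd; move: trb; rewrite -[b * _]mulr1 -hd.
  have -> : b * a1^-1 * (s b * b^-1 * a1 * s d - a1 * d) = s (b * d) - b * d.
    by rewrite rmorphM; field; rewrite a0 b0.
  by rewrite (trace_cobound hm) eqxx.
right; split=> //; have [d d0 cd] := semilinear_dichotomy hm a0 no_sol.
have sd0 : s d != 0 by rewrite fmorph_eq0.
exists d^-1; rewrite ?invr_eq0 // fmorphV invrK; split.
  by apply: (mulIf sd0); rewrite cd; field; rewrite sd0.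
apply/negP => /eqP /(hilbert90 hm) [u hu]; case: no_sol; exists (d * u).
have -> : c * s (d * u) - a1 * (d * u) = a1 * d * (s u - u).
  by rewrite rmorphM mulrA cd; ring.
by rewrite hu; field; rewrite a0 d0.
Qed.

(* b is a right root of P_l, i.e. x - b divides P_l on the right. *)
Definition rroot (l : seq F) (b : F) := act (Pseq s l) b 1 = 0.

Definition sole_root (l : seq F) := forall b, rroot l b -> b = l`_0.

(* Via the remainder theorem, mult_seq is uniqueness of right roots. *)
Lemma mult_seq_sole_root l : (0 < size l)%N -> mult_seq s l <-> sole_root l.
Proof.
case: l => // a l _; split=> [ms b /rdvd_XsubCP /ms //|sole b].
by rewrite rdvd_XsubCP; split=> [/sole //|->]; apply/rdvd_XsubCP; exists (Pseq s l).
Qed.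

(* P_(a :: l) = P_l (x - a), so roots of P_(a :: l) are seen through P_l. *)
Lemma rroot_cons a l b : rroot (a :: l) b <-> act (Pseq s l) b (b - a) = 0.
Proof. by rewrite /rroot /= act_mul act_XsubC rmorph1 mul1r mulr1. Qed.

Lemma rroot_head a l : rroot (a :: l) a.
Proof. by apply/rroot_cons; rewrite subrr act_arg0. Qed.

Lemma rroot_sconj l b g : g != 0 -> act (Pseq s l) b g = 0 -> rroot l (sconj b g).
Proof. by move=> g0; rewrite act_sconj // => /eqP; rewrite mulf_eq0 (negbTE g0) orbF => /eqP. Qed.

Lemma sole_root1 a : sole_root [:: a].
Proof. by move=> b /rroot_cons; rewrite /= act1 => /eqP; rewrite subr_eq0 => /eqP. Qed.

(* A solution of c sigma(d) - a d = 1 with c a root of P_l produces a root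
   a + d^-1 <> a of P_(a :: l). *)
Lemma rroot_of_solution a l c : rroot l c -> (exists d, c * s d - a * d = 1) ->
  exists2 b, b != a & rroot (a :: l) b.
Proof.
move=> lc [d hd]; have d0 : d != 0.
  by apply/eqP=> d0; move/eqP: hd; rewrite d0 rmorph0 !mulr0 subr0 eq_sym oner_eq0.
have sd0 : s d != 0 by rewrite fmorph_eq0.
exists (a + d^-1); first by rewrite -subr_eq0 addrAC subrr add0r invr_eq0.
apply/rroot_cons; rewrite addrAC subrr add0r act_sconj ?invr_eq0 //.
have -> : sconj (a + d^-1) d^-1 = c.
  rewrite /sconj fmorphV; apply: (mulIf sd0); rewrite -[c * s d](subrK (a * d)) hd.
  by field; rewrite d0 sd0 oner_neq0.
by rewrite lc mul0r.
Qed.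

Lemma linked_of_sole_root a1 l c : sole_root (a1 :: l) -> rroot l c -> linked a1 c.
Proof.
move=> sole lc; apply/linked_unsolvable => sol.
have [b ne_b rb] := rroot_of_solution lc sol.
by rewrite (sole _ rb) eqxx in ne_b.
Qed.

Lemma sole_root_cons a1 a2 r : linked a1 a2 -> sole_root (a2 :: r) ->
  sole_root (a1 :: a2 :: r).
Proof.
move=> /linked_unsolvable no_sol sole b /rroot_cons root_b /=.
have [//|ne] := eqVneq b a1; have g0 : b - a1 != 0 by rewrite subr_eq0.
have sg0 : s (b - a1) != 0 by rewrite fmorph_eq0.
have /sole /= e := rroot_sconj g0 root_b.
case: no_sol; exists (b - a1)^-1; rewrite -e /sconj fmorphV.
by field; rewrite g0 -rmorphB sg0.
Qed.

(* If a1 <> 0 is the only root of P_(a1 :: l), the only g with P_l . g = 0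
   at a1 and T(g / a1) = 0 is 0 (Hilbert 90). *)
Lemma kernel_traceless a1 l v : a1 != 0 -> sole_root (a1 :: l) ->
  act (Pseq s l) a1 v = 0 -> tr (v * a1^-1) = 0 -> v = 0.
Proof.
move=> a0 sole kv /(hilbert90 hm) [u hu].
have root_u : act (Pseq s (a1 :: l)) a1 u = 0.
  rewrite /= act_mul act_XsubC.
  by have -> : s u * a1 - a1 * u = v by rewrite -[v](mulfVK a0) -hu; ring.
suff su : s u = u.
  by move/eqP: hu; rewrite su subrr eq_sym mulf_eq0 invr_eq0 (negbTE a0) orbF => /eqP.
have [->|u0] := eqVneq u 0; first exact: rmorph0.
exact: (sconj_fixed a0 u0 (sole _ (rroot_sconj u0 root_u))).
Qed.

Lemma linked_kernel a1 l c : a1 != 0 -> linked a1 c -> rroot l c ->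
  exists2 beta, act (Pseq s l) a1 beta = 0 &
    c = sconj a1 beta /\ tr (beta * a1^-1) != 0.
Proof.
move=> a0 [[a00 _]|[_ [b b0 [cb trb]]]] rc; first by rewrite a00 eqxx in a0.
have cE : c = sconj a1 b by rewrite cb /sconj mulrAC.
by exists b => //; rewrite act_sconj // -cE rc mul0r.
Qed.

(* Uniqueness passes from a1 :: a2 :: r to a2 :: r: two such betas are
   proportional over the fixed field, by kernel_traceless. *)
Lemma sole_root_tail a1 a2 r : sole_root (a1 :: a2 :: r) -> sole_root (a2 :: r).
Proof.
move=> sole c rc /=.
have l2 := linked_of_sole_root sole (rroot_head a2 r).
have lc := linked_of_sole_root sole rc.
have [a0|a0] := eqVneq a1 0; first by move: l2 lc; rewrite a0 !linked0 => -> ->.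
have [b kb [-> trb]] := linked_kernel a0 l2 (rroot_head a2 r).
have [b' kb' [-> trb']] := linked_kernel a0 lc rc.
set k := tr (b' * a1^-1) in trb' *; set k0 := tr (b * a1^-1) in trb *.
have sk : s k = k by exact: s_trace.
have sk0 : s k0 = k0 by exact: s_trace.
have : k * b - k0 * b' = 0.
  apply: (kernel_traceless a0 sole); first by rewrite act_argB !act_argZ // kb kb' !mulr0 subrr.
  by rewrite mulrBl -!mulrA traceB (traceZ m _ sk) (traceZ m _ sk0) mulrC subrr.
move/eqP; rewrite subr_eq0 => /eqP e.
have -> : b' = k / k0 * b by apply: (mulfI trb); rewrite -e; field.
by rewrite sconjZ ?mulf_neq0 ?invr_eq0 // rmorphM fmorphV sk sk0.
Qed.

Fixpoint linked_chain (a : F) (l : seq F) : Prop :=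
  if l is b :: l' then linked a b /\ linked_chain b l' else True.

Lemma sole_root_chain a l : sole_root (a :: l) <-> linked_chain a l.
Proof.
elim: l a => [|b l IH] a /=; first by split=> // _; apply: sole_root1.
split=> [sole|[lab /IH sole]]; last exact: sole_root_cons.
split; first exact: linked_of_sole_root sole (rroot_head b l).
by apply/IH; apply: sole_root_tail sole.
Qed.

Definition mult_condition (a : seq F) := all (fun c => c == 0) a \/
  (a`_0 != 0 /\ forall i : nat, (i.+1 < size a)%N -> twist_step a`_i a`_i.+1).

Lemma chain_condition a l : linked_chain a l <-> mult_condition (a :: l).
Proof.
elim: l a => [|b l IH] a.
  split=> // _; have [->|a0] := eqVneq a 0; first by left; rewrite /= eqxx.
  by right.
rewrite /= IH /mult_condition /=; split.
  case=> [[[-> ->]|[a0 st]] [zl|[b0 st']]].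
  - by left; rewrite eqxx /= in zl *.
  - by rewrite eqxx in b0.
  - by move: (twist_step_neq0 a0 st); case/andP: zl => ->.
  - by right; split=> // -[|i] //; apply: st'.
case=> [/and3P[/eqP a0 /eqP b0 l0]|[a0 st]]; first by rewrite a0 b0; split; left; rewrite ?eqxx.
have b0 := twist_step_neq0 a0 (st 0%N isT).
split; right; split=> //; first exact: (st 0%N).
by move=> i; apply: (st i.+1).
Qed.

Lemma chain_nseq a k : linked_chain a (nseq k.+1 a) <-> linked a a.
Proof.
elim: k => [|k IH]; first by split=> [[]|].
by split=> [[]|l_aa] //; split=> //; apply/IH.
Qed.

(* For a <> 0, (a, a) is linked iff T(a^-1) <> 0: beta must be fixed. *)
Lemma linked_self a : a != 0 -> (linked a a <-> tr a^-1 != 0).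
Proof.
move=> a0; split=> [[[/eqP]|[_ [b b0 [e trb]]]]|tra]; first by rewrite (negbTE a0).
  have e1 : s b * b^-1 = 1 by apply: (mulIf a0); rewrite mul1r -e.
  have sb : s b = b by rewrite -[s b](mulfVK b0) e1 mul1r.
  by move: trb; rewrite (traceZ m _ sb) mulf_eq0 negb_or => /andP[].
by right; split=> //; exists 1; rewrite ?oner_neq0 ?rmorph1 ?invr1 ?mul1r.
Qed.

End MultiplicitySequences.

Theorem mainTheorem18 (F : fieldType) (s : {rmorphism F -> F}) (m : nat)
  (hm : is_order s m) :
  (forall a : seq F, (0 < size a)%N ->
     (mult_seq s a <->
        (all (fun c => c == 0) a \/
         (a`_0 != 0 /\
          forall i : nat, (i.+1 < size a)%N ->
            exists2 beta : F, beta != 0 &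
              a`_i.+1 = s beta * beta^-1 * a`_i /\
              trace s m (beta * (a`_i)^-1) != 0)))) /\
  (forall (a : F) (r : nat), a != 0 -> (2 <= r)%N ->
     (mult_seq s (nseq r a) <-> trace s m a^-1 != 0)).
Proof.
split=> [[//|a l] _|a [|[|r]] // a0 _].
  by rewrite mult_seq_sole_root // (sole_root_chain hm) chain_condition.
by rewrite mult_seq_sole_root // (sole_root_chain hm) chain_nseq linked_self.
Qed.
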